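(* Let $p\ge3$ be a prime, let $d\ge2$, let $D$ be a probability distribution on $\mathbb{F}_p$, let $P:\mathbb{F}_p^n\to\mathbb{F}_p$ be a polynomial of degree at most $d$, and let $\{X_1,\dots,X_d\}$ be a partition of $[n]$. Then \[|\mathbb{E}_{x\sim D^n}\omega_p^{P(x)}|^{2^d}\le\mathbb{E}_{x\sim(D-D)^n}\omega_p^{P_{\{X_1,\dots,X_d\}}(x)}.\]
   Context: $\omega_p=\exp(2\pi i/p)$. $D^n$ denotes the product distribution with independent coordinates distributed according to $D$; $D-D$ is the distribution of $u-v$ for independent $u,v\sim D$. Writing $P$ as a linear combination of monomials $a\prod_{u=1}^n x_u^{s_u}$ with $a\ne0$, $P_{\{X_1,\dots,X_d\}}$ is the polynomial obtained by keeping only those monomials such that for each $i\in[d]$ there is $u\in X_i$ with $s_u\ge1$. *)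

From mathcomp Require Import all_boot all_algebra.
From mathcomp Require Import complex.
From mathcomp Require Import reals trigo.
From mathcomp Require Import mpoly.

Set Implicit Arguments.
Unset Strict Implicit.
Unset Printing Implicit Defensive.
Import GRing.Theory Num.Theory.
Local Open Scope ring_scope.

Definition omega (R : realType) (p : nat) : R[i] :=
  (cos (2 * pi / p%:R) +i* sin (2 * pi / p%:R))%C.

Definition is_distr (R : realType) (T : finType) (D : T -> R) : Prop :=
  (forall t, 0 <= D t) /\ \sum_(t : T) D t = 1.

Definition omega_pow (R : realType) (p : nat) (a : 'F_p) : R[i] :=
  omega R p ^+ (nat_of_ord a).

Definition char_sum (R : realType) (p n : nat) (D : 'F_p -> R)
    (Q : {mpoly 'F_p[n]}) : R[i] :=
  \sum_(x : {ffun 'I_n -> 'F_p})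
    ((\prod_(u < n) D (x u)) %:C)%C * omega_pow R (Q.@[x]).

Definition diff_distr (R : realType) (p : nat) (D : 'F_p -> R) : 'F_p -> R :=
  fun z => \sum_(u : 'F_p) \sum_(v : 'F_p | u - v == z) D u * D v.

(* P_{X_1,...,X_d}: the partition {X_1,...,X_d} of [n] is given by
   part : 'I_n -> 'I_d, with X_i = part^{-1}(i).  Keep the monomials m
   such that every block X_i contains some u with m u >= 1. *)
Definition restrict_poly (K : fieldType) (n d : nat) (part : 'I_n -> 'I_d)
    (P : {mpoly K[n]}) : {mpoly K[n]} :=
  \sum_(m <- msupp P | [forall i : 'I_d, exists u : 'I_n, (part u == i) && (0 < m u)%N])
    P@_m *: 'X_[m].

From mathcomp Require Import all_boot all_algebra.
From mathcomp Require Import complex.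
From mathcomp Require Import reals trigo.
From mathcomp Require Import mpoly.
From mathcomp Require Import order ring.

Set Implicit Arguments.
Unset Strict Implicit.
Unset Printing Implicit Defensive.
Import Order.TTheory GRing.Theory Num.Theory.
Local Open Scope ring_scope.

(* Iterated Cauchy-Schwarz (van der Corput).  Put the variables of the blocks
   [X_1, ..., X_d] one at a time into a "differenced" state: at stage [j] each
   monomial of [P] has its restriction to the first [j] blocks replaced by the
   increment [mon(x) - mon(x')] between two independent samples.  Resampling
   the coordinates of block [j] and applying Cauchy-Schwarz (Jensen for
   [|.|^2]) squares the character sum, so [|E w^P|^(2^j)] is bounded by the
   stage-[j] sum.  At stage [d], since [deg P <= d], a monomial that meets every
   block contains exactly one variable of each, with exponent 1, so its
   increment is the monomial evaluated at [x - x'], while the other monomials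
   vanish; this is the character sum of [P_{X_1,...,X_d}] under [D - D]. *)

Definition splice (T : Type) (n : nat) (S : pred 'I_n) (y z : {ffun 'I_n -> T}) :
    {ffun 'I_n -> T} :=
  [ffun u => if S u then y u else z u].

Lemma splice_swapK (T : Type) (n : nat) (S : pred 'I_n) (y z : {ffun 'I_n -> T}) :
  splice S (splice S y z) (splice S z y) = y.
Proof. by apply/ffunP => u; rewrite !ffunE; case: (S u). Qed.

Section ProductExpectation.
Variables (C : comPzRingType) (T : finType) (n : nat) (D : T -> C).
Implicit Types (x y z : {ffun 'I_n -> T}) (f : {ffun 'I_n -> T} -> C).

Definition pmass x : C := \prod_u D (x u).

Definition expect f : C := \sum_x pmass x * f x.

Lemma eq_expect f g : (forall x, f x = g x) -> expect f = expect g.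
Proof. by move=> eq_fg; apply: eq_bigr => x _; rewrite eq_fg. Qed.

Lemma expect_exchange (g : {ffun 'I_n -> T} -> {ffun 'I_n -> T} -> C) :
  expect (fun x => expect (g x)) = expect (fun y => expect (g^~ y)).
Proof.
rewrite /expect; under eq_bigr do rewrite big_distrr.
rewrite exchange_big /=; apply: eq_bigr => y _; rewrite big_distrr /=.
by apply: eq_bigr => x _; rewrite !mulrA [pmass x * _]mulrC.
Qed.

Lemma pmass_splice S y z :
  pmass (splice S y z) * pmass (splice S z y) = pmass y * pmass z.
Proof.
rewrite /pmass -!big_split /=; apply: eq_bigr => u _.
by rewrite !ffunE; case: (S u); rewrite // mulrC.
Qed.

Hypothesis D_sum1 : \sum_t D t = 1.

Lemma pmass_sum1 : \sum_x pmass x = 1.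
Proof.
rewrite /pmass -(bigA_distr_bigA (fun _ t => D t)) /=.
by rewrite big1 // => u _; rewrite D_sum1.
Qed.

Lemma expect_cst c : expect (fun=> c) = c.
Proof. by rewrite /expect -big_distrl /= pmass_sum1 mul1r. Qed.

(* [(y, z) |-> (splice S y z, splice S z y)] is an involution preserving the product law. *)
Lemma expect_splice S f :
  expect (fun z => expect (fun y => f (splice S y z))) = expect f.
Proof.
pose swap (w : {ffun 'I_n -> T} * {ffun 'I_n -> T}) := (splice S w.1 w.2, splice S w.2 w.1).
have swapK : involutive swap by move=> [y z]; rewrite /swap /= !splice_swapK.
rewrite expect_exchange /expect.
under eq_bigr do rewrite big_distrr /=.
rewrite pair_bigA (reindex_inj (inv_inj swapK)) /=.
under eq_bigr => w _ do rewrite mulrA pmass_splice splice_swapK.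
rewrite -(pair_bigA _ (fun y z => pmass y * pmass z * f y)) /=.
apply: eq_bigr => y _; rewrite -big_distrl -big_distrr /= pmass_sum1.
by rewrite mulr1.
Qed.

End ProductExpectation.

Lemma expect_sub (C : comPzRingType) (T : finZmodType) (n : nat) (D : T -> C)
    (h : {ffun 'I_n -> T} -> C) :
  expect D (fun x => expect D (fun x' => h (x - x'))) =
  expect (fun t => \sum_a D a * D (a - t)) h.
Proof.
rewrite /expect; under eq_bigr => x _ do
  rewrite big_distrr (reindex_inj (inv_inj (subKr x))) /=.
under eq_bigr do under eq_bigr do rewrite subKr mulrA.
rewrite exchange_big /=; apply: eq_bigr => z _.
rewrite -big_distrl /=; congr (_ * _).
have subE (x : {ffun 'I_n -> T}) u : (x - z) u = x u - z u by rewrite !ffunE.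
rewrite /pmass; under eq_bigr => x _ do rewrite -big_split /=.
under eq_bigr => x _ do under eq_bigr => u _ do rewrite subE.
by rewrite (bigA_distr_bigA (fun u a => D a * D (a - z u))).
Qed.

Lemma sqr_normr_wmean_le (C : numDomainType) (I : finType) (w f : I -> C) :
  (forall i, 0 <= w i) -> \sum_i w i = 1 ->
  `|\sum_i w i * f i| ^+ 2 <= \sum_i w i * `|f i| ^+ 2.
Proof.
move=> w_ge0 w_sum1; set m := \sum_i w i * `|f i|.
have m_ge0 : 0 <= m by apply: sumr_ge0 => i _; rewrite mulr_ge0.
have triangle : `|\sum_i w i * f i| <= m.
  apply: le_trans (ler_norm_sum _ _ _) _; apply: ler_sum => i _.
  by rewrite normrM ger0_norm.
have var_ge0 : 0 <= \sum_i w i * (`|f i| - m) ^+ 2.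
  apply: sumr_ge0 => i _; rewrite mulr_ge0 // real_exprn_even_ge0 //.
  by rewrite realB ?ger0_real.
have var_eq : \sum_i w i * (`|f i| - m) ^+ 2 = \sum_i w i * `|f i| ^+ 2 - m ^+ 2.
  have expand i : w i * (`|f i| - m) ^+ 2 =
      w i * `|f i| ^+ 2 - (m *+ 2) * (w i * `|f i|) + m ^+ 2 * w i by ring.
  under eq_bigr do rewrite expand.
  by rewrite big_split sumrB -!big_distrr /= -/m w_sum1; ring.
apply: le_trans (_ : m ^+ 2 <= _).
  by rewrite lerXn2r // nnegrE normr_ge0.
by rewrite -subr_ge0 -var_eq.
Qed.

Section ExpectationInequalities.
Variables (C : numDomainType) (T : finType) (n : nat) (D : T -> C).
Hypotheses (D_ge0 : forall t, 0 <= D t) (D_sum1 : \sum_t D t = 1).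
Implicit Types (f g : {ffun 'I_n -> T} -> C).

Lemma pmass_ge0 (x : {ffun 'I_n -> T}) : 0 <= pmass D x.
Proof. by apply: prodr_ge0 => u _. Qed.

Lemma ler_expect f g : (forall x, f x <= g x) -> expect D f <= expect D g.
Proof. by move=> le_fg; apply: ler_sum => x _; rewrite ler_wpM2l ?pmass_ge0. Qed.

Lemma sqr_normr_expect_le f : `|expect D f| ^+ 2 <= expect D (fun x => `|f x| ^+ 2).
Proof. exact: sqr_normr_wmean_le pmass_ge0 (pmass_sum1 _ D_sum1). Qed.

End ExpectationInequalities.

Section RootOfUnity.
Variables (R : realType) (p : nat).
Hypothesis p_pr : prime p.

Lemma omega_expr k : omega R p ^+ k =
  (cos ((2 * pi / p%:R) *+ k) +i* sin ((2 * pi / p%:R) *+ k))%C.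
Proof.
elim: k => [|k IHk]; first by rewrite expr0 !mulr0n cos0 sin0.
rewrite exprSr IHk /omega; set t := 2 * pi / p%:R.
rewrite mulrSr cosD sinD.
by apply/eqP; rewrite eq_complex /=; apply/andP; split; apply/eqP; ring.
Qed.

Lemma omega_expr_p : omega R p ^+ p = 1.
Proof.
have p_gt0 : (0 < p)%N := prime_gt0 p_pr.
rewrite omega_expr -mulr_natr mulrAC -mulrA divff ?pnatr_eq0 -?lt0n // mulr1.
by rewrite mulr_natl cos2pi sin2pi.
Qed.

Lemma conj_omega_mul : (omega R p)^*%C * omega R p = 1.
Proof.
rewrite /omega /=; apply/eqP; rewrite eq_complex /=; apply/andP; split; apply/eqP.
  by rewrite mulNr opprK -!expr2 cos2Dsin2.
ring.
Qed.

Lemma omega_powD (a b : 'F_p) :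
  omega_pow R (a + b) = omega_pow R a * omega_pow R b.
Proof.
have val_add : nat_of_ord (a + b) = ((a + b) %% p)%N by rewrite /= {3}(Fp_cast p_pr).
by rewrite /omega_pow val_add (expr_mod _ omega_expr_p) exprD.
Qed.

Lemma omega_pow0 : omega_pow R (0 : 'F_p) = 1.
Proof. by rewrite /omega_pow expr0. Qed.

Lemma conj_omega_pow (a : 'F_p) : ((omega_pow R a)^*)%C = omega_pow R (- a).
Proof.
have inv_a : omega_pow R a * omega_pow R (- a) = 1 by rewrite -omega_powD subrr omega_pow0.
have conj_inv : ((omega_pow R a)^*)%C * omega_pow R a = 1.
  by rewrite /omega_pow rmorphXn -exprMn conj_omega_mul expr1n.
by rewrite -[LHS]mulr1 -inv_a mulrA conj_inv mul1r.
Qed.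

Lemma sqr_normr_expect_omega_pow (T : finType) (n : nat) (D : T -> R[i])
    (f : {ffun 'I_n -> T} -> 'F_p) :
  (forall t, ((D t)^*)%C = D t) ->
  `|expect D (fun y => omega_pow R (f y))| ^+ 2 =
  expect D (fun y => expect D (fun y' => omega_pow R (f y - f y'))).
Proof.
move=> D_real; rewrite sqr_normc /expect raddf_sum big_distrl.
apply: eq_bigr => y _; rewrite !big_distrr; apply: eq_bigr => y' _ /=.
have pmass_real : ((pmass D y')^*)%C = pmass D y'.
  by rewrite /pmass rmorph_prod; apply: eq_bigr => u _; apply: D_real.
have conjM (u v : R[i]) : ((u * v)^*)%C = (u^*)%C * (v^*)%C by exact: rmorphM.
by rewrite conjM pmass_real conj_omega_pow omega_powD; ring.
Qed.

End RootOfUnity.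

Section BlockDifferences.
Variables (K : comNzRingType) (n d : nat) (part : 'I_n -> 'I_d).
Implicit Types (m : 'X_{1..n}) (Y : {ffun 'I_n -> K}).

Definition block (j : nat) : pred 'I_n := fun u => part u == j :> nat.

Definition block_mon m (i : 'I_d) Y : K := \prod_(u | part u == i) Y u ^+ m u.

Lemma prod_block_mon m Y : \prod_i block_mon m i Y = \prod_u Y u ^+ m u.
Proof. by rewrite [RHS](partition_big part xpredT). Qed.

Lemma block_mon_splice m i (j : nat) (y Y : {ffun 'I_n -> K}) :
  block_mon m i (splice (block j) y Y) = block_mon m i (if i == j :> nat then y else Y).
Proof.
apply: eq_bigr => u /eqP part_u; rewrite ffunE /block part_u.
by case: (i == j :> nat).
Qed.

Variable P : {mpoly K[n]}.

Definition block_diff (j : nat) (X X' z : {ffun 'I_n -> K}) : K :=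
  \sum_(m <- msupp P) P@_m *
    (\prod_(i < d | (i < j)%N) (block_mon m i X - block_mon m i X')) *
    \prod_(i < d | (j <= i)%N) block_mon m i z.

Lemma block_diff0 (X X' z : {ffun 'I_n -> K}) : block_diff 0 X X' z = P.@[z].
Proof.
rewrite mevalE; apply: eq_bigr => m _.
by rewrite [\prod_(i < d | (i < 0)%N) _]big_pred0 // mulr1 -prod_block_mon.
Qed.

Lemma block_diffS (j : nat) (X X' y y' z : {ffun 'I_n -> K}) : (j < d)%N ->
  block_diff j X X' (splice (block j) y z) - block_diff j X X' (splice (block j) y' z) =
  block_diff j.+1 (splice (block j) y X) (splice (block j) y' X') z.
Proof.
move=> lt_jd; rewrite /block_diff -sumrB; apply: eq_bigr => m _.
pose j0 : 'I_d := Ordinal lt_jd.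
rewrite (bigD1 j0 (P := fun i : 'I_d => (j <= i)%N)) //=.
rewrite (bigD1 j0 (P := fun i : 'I_d => (j <= i)%N)) //=.
rewrite (bigD1 j0 (P := fun i : 'I_d => (i < j.+1)%N)) //=.
rewrite !block_mon_splice eqxx.
have high w : \prod_(i < d | (j <= i)%N && (i != j0)) block_mon m i (splice (block j) w z) =
    \prod_(i < d | (j < i)%N) block_mon m i z.
  apply: eq_big => [i|i /andP[_ ne_ij]].
    by rewrite ltn_neqAle andbC eq_sym.
  by rewrite block_mon_splice ifN.
have low : \prod_(i < d | (i < j.+1)%N && (i != j0))
      (block_mon m i (splice (block j) y X) - block_mon m i (splice (block j) y' X')) =
    \prod_(i < d | (i < j)%N) (block_mon m i X - block_mon m i X').
  apply: eq_big => [i|i /andP[_ ne_ij]].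
    by rewrite ltnS leq_eqVlt -val_eqE; case: ltngtP.
  by rewrite !block_mon_splice !ifN.
rewrite !high low; ring.
Qed.

End BlockDifferences.

Lemma prod_expn_single (K : comNzRingType) (I : finType) (Q : pred I) (e : I -> nat) :
  (\sum_(u | Q u) e u)%N = 1%N ->
  exists u0, forall g : I -> K, \prod_(u | Q u) g u ^+ e u = g u0.
Proof.
move=> sum_e1.
have [u0 /andP[Q_u0 e_u0_gt0] | no_support] := pickP (fun u => Q u && (0 < e u)%N);
  last first.
  move: sum_e1; rewrite big1 // => u Q_u.
  by apply/eqP; move: (no_support u); rewrite Q_u /= lt0n => /negbFE.
exists u0 => g; move: sum_e1.
rewrite (bigD1 u0) //= [in X in _ -> X](bigD1 u0) //=.
case: (e u0) e_u0_gt0 => [|[|k]] // _ [/eqP].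
rewrite sum_nat_eq0 => /forallP e0.
rewrite expr1 big1 ?mulr1 // => u Q_u.
by move: (e0 u); rewrite Q_u => /eqP ->; rewrite expr0.
Qed.

Lemma block_deg_eq1 (n d : nat) (part : 'I_n -> 'I_d) (m : 'X_{1..n}) :
  [forall i : 'I_d, exists u : 'I_n, (part u == i) && (0 < m u)%N] ->
  (mdeg m <= d)%N -> forall i, (\sum_(u | part u == i) m u)%N = 1%N.
Proof.
move=> /forallP meets deg_le i; set s := fun i => (\sum_(u | part u == i) m u)%N.
have s_ge1 k : (1 <= s k)%N.
  have /existsP[u /andP[/eqP <- m_u_gt0]] := meets k.
  by rewrite /s (bigD1 u) //= (leq_trans m_u_gt0) ?leq_addr.
have /leqif_sum := fun k (_ : true) => leqif_eq (s_ge1 k).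
rewrite sum1_card card_ord => /geq_leqif.
have -> : (\sum_k s k)%N = mdeg m by rewrite mdegE (partition_big part xpredT).
by rewrite deg_le => /esym/forallP/(_ i)/eqP.
Qed.

Lemma block_diff_last (K : fieldType) (n d : nat) (part : 'I_n -> 'I_d) (P : {mpoly K[n]})
    (X X' z : {ffun 'I_n -> K}) :
  (msize P <= d.+1)%N -> block_diff part P d X X' z = (restrict_poly part P).@[X - X'].
Proof.
move=> size_le; rewrite /block_diff /restrict_poly raddf_sum /= [RHS]big_mkcond /=.
rewrite big_seq [RHS]big_seq; apply: eq_bigr => m m_supp.
rewrite [\prod_(i < d | (d <= i)%N) _]big_pred0 => [|i]; last by rewrite leqNgt ltn_ord.
rewrite mulr1 (eq_bigl xpredT) => [|i]; last exact: ltn_ord.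
case: ifP => [meets | /negbT/forallPn[i /existsPn no_var]].
  rewrite mevalZ mevalX -(prod_block_mon part); congr (_ * _); apply: eq_bigr => i _.
  have deg_le : (mdeg m <= d)%N by rewrite -ltnS (leq_trans (msize_mdeg_lt m_supp)).
  have [u0 block_monE] := prod_expn_single K (block_deg_eq1 meets deg_le i).
  by rewrite /block_mon !block_monE !ffunE.
have block_mon1 Y : block_mon part m i Y = 1.
  apply: big1 => u part_u; move: (no_var u); rewrite part_u -eqn0Ngt => /eqP->.
  by rewrite expr0.
by rewrite (bigD1 i) //= !block_mon1 subrr mul0r mulr0.
Qed.

Section IteratedCauchySchwarz.
Variables (R : realType) (p n d : nat) (D : 'F_p -> R).
Variables (part : 'I_n -> 'I_d) (P : {mpoly 'F_p[n]}).
Hypotheses (p_pr : prime p) (D_distr : is_distr D).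

Let Dc (t : 'F_p) : R[i] := (D t)%:C%C.

Let Dc_ge0 t : 0 <= Dc t.
Proof. by rewrite ler0c; case: D_distr. Qed.

Let Dc_sum1 : \sum_t Dc t = 1.
Proof. by rewrite -rmorph_sum; case: D_distr => _ ->. Qed.

Let Dc_real t : ((Dc t)^*)%C = Dc t.
Proof. exact: conjc_real. Qed.

Lemma char_sumE (E : 'F_p -> R) (Q : {mpoly 'F_p[n]}) :
  char_sum E Q = expect (fun t => (E t)%:C%C) (fun x => omega_pow R Q.@[x]).
Proof. by apply: eq_bigr => x _; rewrite rmorph_prod. Qed.

Definition block_diff_sum (j : nat) : R[i] :=
  expect Dc (fun X => expect Dc (fun X' =>
    expect Dc (fun z => omega_pow R (block_diff part P j X X' z)))).

Lemma block_diff_sum0 : block_diff_sum 0 = char_sum D P.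
Proof.
rewrite /block_diff_sum char_sumE.
under eq_expect do under eq_expect do under eq_expect do rewrite block_diff0.
by rewrite !expect_cst.
Qed.

Lemma block_diff_sum_last : (msize P <= d.+1)%N ->
  block_diff_sum d = char_sum (diff_distr D) (restrict_poly part P).
Proof.
move=> size_le; rewrite /block_diff_sum char_sumE.
under eq_expect do under eq_expect do under eq_expect do rewrite block_diff_last //.
under eq_expect do under eq_expect do rewrite expect_cst //.
rewrite (expect_sub _ (fun v => omega_pow R (restrict_poly part P).@[v])).
apply: eq_bigr => z _; congr (_ * _).
rewrite /pmass; apply: eq_bigr => u _.
rewrite /diff_distr rmorph_sum; apply: eq_bigr => a _.
rewrite (big_pred1 (a - z u)) ?rmorphM // => b /=.
by rewrite subr_eq addrC -subr_eq.
Qed.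

Lemma block_diff_sumS (j : nat) : (j < d)%N ->
  `|block_diff_sum j| ^+ 2 <= block_diff_sum j.+1.
Proof.
move=> lt_jd; set S := block part j.
pose F X X' := block_diff part P j X X'.
pose A X X' z := expect Dc (fun y => omega_pow R (F X X' (splice S y z))).
have resample X X' : expect Dc (fun z => omega_pow R (F X X' z)) = expect Dc (A X X').
  by rewrite /A (expect_splice Dc_sum1 S (fun x => omega_pow R (F X X' x))).
have -> : block_diff_sum j.+1 =
    expect Dc (fun X => expect Dc (fun X' => expect Dc (fun z => `|A X X' z| ^+ 2))).
  pose G W W' := expect Dc (fun z => omega_pow R (block_diff part P j.+1 W W' z)).
  rewrite /block_diff_sum -(expect_splice Dc_sum1 S (fun W => expect Dc (G W))).
  under eq_expect => X do under eq_expect => y do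
    rewrite -(expect_splice Dc_sum1 S (G (splice S y X))).
  apply: eq_expect => X; rewrite expect_exchange; apply: eq_expect => X'.
  under [RHS]eq_expect => z do rewrite (sqr_normr_expect_omega_pow p_pr _ Dc_real).
  under [RHS]eq_expect => z do under eq_expect => y do under eq_expect => y' do
    rewrite block_diffS //.
  by under eq_expect => y do rewrite expect_exchange; rewrite expect_exchange.
apply: le_trans (sqr_normr_expect_le Dc_ge0 Dc_sum1 _) _.
apply: ler_expect => // X; apply: le_trans (sqr_normr_expect_le Dc_ge0 Dc_sum1 _) _.
apply: ler_expect => // X'; rewrite resample.
exact: sqr_normr_expect_le.
Qed.

Lemma norm_char_sum_le (j : nat) : (j < d)%N ->
  `|char_sum D P| ^+ (2 ^ j.+1) <= block_diff_sum j.+1.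
Proof.
elim: j => [|j IHj] lt_jd; first by rewrite expn1 -block_diff_sum0 block_diff_sumS.
have IH := IHj (ltnW lt_jd).
have stage_ge0 : 0 <= block_diff_sum j.+1 := le_trans (exprn_ge0 _ (normr_ge0 _)) IH.
rewrite expnSr exprM; apply: le_trans (block_diff_sumS lt_jd).
by rewrite (ger0_norm stage_ge0) lerXn2r ?nnegrE ?exprn_ge0.
Qed.

End IteratedCauchySchwarz.

Theorem proposition3p7 (R : realType) (p d n : nat) (D : 'F_p -> R)
    (P : {mpoly 'F_p[n]}) (part : 'I_n -> 'I_d) :
  prime p -> (3 <= p)%N -> (2 <= d)%N ->
  is_distr D ->
  (msize P <= d.+1)%N ->
  (forall i : 'I_d, exists u : 'I_n, part u = i) ->
  `| char_sum D P | ^+ (2 ^ d) <=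
    char_sum (diff_distr D) (restrict_poly part P).
Proof.
move=> p_pr _ d_ge2 D_distr size_le _.
have d_gt0 : (0 < d)%N by apply: leq_trans d_ge2.
have := norm_char_sum_le part P p_pr D_distr (j := d.-1).
by rewrite prednK // -block_diff_sum_last //; apply.
Qed.
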